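(* Let $D$ be a function assigning a nonnegative real number to each pair of density operators on the same finite-dimensional space and which is contractive under CPTP maps, i.e. $D(\Phi(\rho),\Phi(\sigma))\le D(\rho,\sigma)$ for all CPTP maps $\Phi$. Let $\rho$ be a density operator on $\mathbb{C}^d$, $\rho'=U_A(\rho\otimes|0\rangle\langle0|^{\otimes d})U_A^\dagger$ and $\rho''=\Delta(\rho')$. Then for every $2\le k\le d$, $$C_D^{(k)}(\rho)\ge E_D^{(k+1)}(\rho'),\qquad C_D^{(k)}(\rho)\ge E_D^{(k)}(\rho''),$$ where $E_D^{(k+1)}(\rho')$ is computed with respect to the $d+1$ parties (qudit and $d$ qubits) and $E_D^{(k)}(\rho'')$ with respect to the $d$ qubit parties.
   Context: Fix an orthonormal basis $\{|i\rangle\}_{i=1}^d$ of $\mathbb{C}^d$. The coherence rank $\mathrm{CR}(|\psi\rangle)$ is the number of nonzero coefficients of $|\psi\rangle$ in this basis; $\mathrm{CN}(\rho)=\min\max_i\mathrm{CR}(|\psi_i\rangle)$ over pure-state decompositions $\rho=\sum_ip_i|\psi_i\rangle\langle\psi_i|$. $\mathcal{I}^{(k)}$ is the set of states with $\mathrm{CN}\le k$. A multipartite pure state is $k$-producible if it is a tensor product of factors each on at most $k$ parties, a mixed state is $k$-producible if it is a convex combination of such; $\mathcal{P}^{(k)}$ denotes the set of $k$-producible states. Define $E_D^{(k)}(\rho)=\inf_{\varsigma\in\mathcal{P}^{(k-1)}}D(\rho,\varsigma)$ and $C_D^{(k)}(\rho)=\inf_{\sigma\in\mathcal{I}^{(k-1)}}D(\rho,\sigma)$.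 Notation $|\underline{2^{d-i}}\rangle=|0\rangle^{\otimes(i-1)}|1\rangle|0\rangle^{\otimes(d-i)}\in(\mathbb{C}^2)^{\otimes d}$. $U_A=\sum_{i=1}^d|i\rangle\langle i|\otimes\mathbb{1}_2^{\otimes(i-1)}\otimes\sigma_x\otimes\mathbb{1}_2^{\otimes(d-i)}$. With $\mathcal{F}|j\rangle=\frac1{\sqrt d}\sum_m e^{2\pi ijm/d}|m\rangle$ and $U_D^{(m)}=\bigotimes_{j=1}^d(|0\rangle\langle0|+e^{-2\pi ijm/d}|1\rangle\langle1|)$, the map $\Delta$ from qudit-plus-$d$-qubit states to $d$-qubit states is $\Delta(X)=\sum_{m=1}^dU_D^{(m)}\mathrm{Tr}_{\mathrm{qudit}}[(|m\rangle\langle m|\otimes\mathbb{1})(\mathcal{F}\otimes\mathbb{1})X(\mathcal{F}^\dagger\otimes\mathbb{1})]U_D^{(m)\dagger}$. *)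

From Stdlib Require Import Reals List Arith.
From Stdlib Require Import ClassicalEpsilon.
Import ListNotations.
Open Scope R_scope.

Record Cplx := mkC { re : R ; im : R }.
Definition C0 : Cplx := mkC 0 0.
Definition C1 : Cplx := mkC 1 0.
Definition RtoC (x : R) : Cplx := mkC x 0.
Definition Cadd (a b : Cplx) : Cplx := mkC (re a + re b) (im a + im b).
Definition Cmul (a b : Cplx) : Cplx :=
  mkC (re a * re b - im a * im b) (re a * im b + im a * re b).
Definition Cconj (a : Cplx) : Cplx := mkC (re a) (- im a).
Definition Cnorm2 (a : Cplx) : R := re a * re a + im a * im a.
Definition Cexpi (t : R) : Cplx := mkC (cos t) (sin t).

Definition Ceq_dec (a b : Cplx) : {a = b} + {a <> b}.
Proof.
  destruct a as [a1 a2], b as [b1 b2].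
  destruct (Req_EM_T a1 b1) as [e1|n1]; [destruct (Req_EM_T a2 b2) as [e2|n2]|].
  - left; subst; reflexivity.
  - right; intro H; inversion H; auto.
  - right; intro H; inversion H; auto.
Defined.

Fixpoint Csum (n : nat) (f : nat -> Cplx) : Cplx :=
  match n with O => C0 | S n' => Cadd (Csum n' f) (f n') end.
Fixpoint Cprod (n : nat) (f : nat -> Cplx) : Cplx :=
  match n with O => C1 | S n' => Cmul (Cprod n' f) (f n') end.
Fixpoint Rsum (n : nat) (f : nat -> R) : R :=
  match n with O => 0 | S n' => Rsum n' f + f n' end.

(* basis |0>,...,|n-1> (0-indexed; the paper's |i> is our index i-1) *)
Definition Vec := nat -> Cplx.
Definition Mat := nat -> nat -> Cplx.

Definition supportedV (n : nat) (v : Vec) : Prop := forall i, (n <= i)%nat -> v i = C0.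
Definition supported (n : nat) (A : Mat) : Prop :=
  forall i j, (n <= i)%nat \/ (n <= j)%nat -> A i j = C0.

Definition inb (n i : nat) : bool := Nat.ltb i n.

Definition madd (A B : Mat) : Mat := fun i j => Cadd (A i j) (B i j).
Definition mscale (c : Cplx) (A : Mat) : Mat := fun i j => Cmul c (A i j).
Definition Msum (n : nat) (F : nat -> Mat) : Mat := fun i j => Csum n (fun l => F l i j).
Definition mmul (n : nat) (A B : Mat) : Mat :=
  fun i j => Csum n (fun k => Cmul (A i k) (B k j)).
Definition adj (A : Mat) : Mat := fun i j => Cconj (A j i).
Definition trace (n : nat) (A : Mat) : Cplx := Csum n (fun i => A i i).
Definition idm (n : nat) : Mat :=
  fun i j => if (Nat.eqb i j && inb n i)%bool then C1 else C0.
Definition outer (v : Vec) : Mat := fun i j => Cmul (v i) (Cconj (v j)).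
Definition projm (n m : nat) : Mat :=
  fun i j => if (Nat.eqb i m && Nat.eqb j m && inb n m)%bool then C1 else C0.

Definition quad (n : nat) (A : Mat) (v : Vec) : Cplx :=
  Csum n (fun i => Csum n (fun j => Cmul (Cconj (v i)) (Cmul (A i j) (v j)))).

Definition PSD (n : nat) (A : Mat) : Prop :=
  supported n A /\ forall v, im (quad n A v) = 0 /\ 0 <= re (quad n A v).

Definition density (n : nat) (A : Mat) : Prop := PSD n A /\ trace n A = C1.

Definition vnorm2 (n : nat) (v : Vec) : R := Rsum n (fun i => Cnorm2 (v i)).
Definition unitV (n : nat) (v : Vec) : Prop := supportedV n v /\ vnorm2 n v = 1.

(* Kronecker product A (x) B, B of dimension m; index (i1,i2) |-> i1*m+i2 *)
Definition kron (m : nat) (A B : Mat) : Mat :=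
  fun i j => Cmul (A (i / m)%nat (j / m)%nat) (B (i mod m)%nat (j mod m)%nat).

Definition dimL (l : list (nat * Mat)) : nat := fold_right (fun p acc => (fst p * acc)%nat) 1%nat l.
(* tensor product of a list of (dimension, matrix), first factor most significant *)
Fixpoint kronL (l : list (nat * Mat)) : Mat :=
  match l with
  | [] => idm 1
  | (n, A) :: l' => kron (dimL l') A (kronL l')
  end.

Definition ptrace1 (n1 n2 : nat) (X : Mat) : Mat :=
  fun s s' => if (inb n2 s && inb n2 s')%bool
              then Csum n1 (fun a => X (a * n2 + s)%nat (a * n2 + s')%nat) else C0.

(* block (a,b) of X on C^n (x) C^r *)
Definition block (n r : nat) (X : Mat) (a b : nat) : Mat :=
  fun i j => if (inb n i && inb n j)%bool then X (i * r + a)%nat (j * r + b)%nat else C0.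
(* (Phi (x) id_r)(X) *)
Definition ampl (n m r : nat) (Phi : Mat -> Mat) (X : Mat) : Mat :=
  fun I J => if (inb (m * r) I && inb (m * r) J)%bool
             then Phi (block n r X (I mod r) (J mod r)) (I / r)%nat (J / r)%nat else C0.

Definition CPTP (n m : nat) (Phi : Mat -> Mat) : Prop :=
  (forall A, supported n A -> supported m (Phi A)) /\
  (forall A B, supported n A -> supported n B -> Phi (madd A B) = madd (Phi A) (Phi B)) /\
  (forall c A, supported n A -> Phi (mscale c A) = mscale c (Phi A)) /\
  (forall A, supported n A -> trace m (Phi A) = trace n A) /\
  (forall r X, (0 < r)%nat -> PSD (n * r) X -> PSD (m * r) (ampl n m r Phi X)).

Definition CR (d : nat) (v : Vec) : nat :=
  length (filter (fun i => if Ceq_dec (v i) C0 then false else true) (seq 0 d)).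

Definition incoh (d k : nat) (rho : Mat) : Prop :=
  density d rho /\
  exists (L : nat) (p : nat -> R) (psi : nat -> Vec),
    (forall l, (l < L)%nat -> 0 <= p l /\ unitV d (psi l) /\ (CR d (psi l) <= k)%nat) /\
    Rsum L p = 1 /\
    rho = Msum L (fun l => mscale (RtoC (p l)) (outer (psi l))).

(* a system is a list of local dimensions (party 0 first = most significant) *)
Definition dimprod (ds : list nat) : nat := fold_right Nat.mul 1%nat ds.
Definition digit (ds : list nat) (p I : nat) : nat :=
  ((I / dimprod (skipn (S p) ds)) mod (nth p ds 1%nat))%nat.

(* k-producible pure state: the parties are partitioned into blocks (labels
   blk p < #parties) of at most k parties, and psi is the tensor product of
   block vectors phi b (phi b depends only on the local indices of block b) *)
Definition kprod_pure (ds : list nat) (k : nat) (psi : Vec) : Prop :=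
  let N := dimprod ds in let n := length ds in
  unitV N psi /\
  exists (blk : nat -> nat) (phi : nat -> Vec),
    (forall p, (p < n)%nat -> (blk p < n)%nat) /\
    (forall b, (b < n)%nat -> (length (filter (fun p => Nat.eqb (blk p) b) (seq 0 n)) <= k)%nat) /\
    (forall b I J, (b < n)%nat -> (I < N)%nat -> (J < N)%nat ->
        (forall p, (p < n)%nat -> blk p = b -> digit ds p I = digit ds p J) ->
        phi b I = phi b J) /\
    (forall I, (I < N)%nat -> psi I = Cprod n (fun b => phi b I)).

Definition kprod (ds : list nat) (k : nat) (rho : Mat) : Prop :=
  density (dimprod ds) rho /\
  exists (L : nat) (p : nat -> R) (psi : nat -> Vec),
    (forall l, (l < L)%nat -> 0 <= p l /\ kprod_pure ds k (psi l)) /\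
    Rsum L p = 1 /\
    rho = Msum L (fun l => mscale (RtoC (p l)) (outer (psi l))).

Definition is_inf (S : R -> Prop) (m : R) : Prop :=
  (forall x, S x -> m <= x) /\ (forall b, (forall x, S x -> b <= x) -> b <= m).
Definition Rinf (S : R -> Prop) : R := epsilon (inhabits 0) (is_inf S).

Definition C_D (D : nat -> Mat -> Mat -> R) (d k : nat) (rho : Mat) : R :=
  Rinf (fun x => exists sigma, incoh d (k - 1) sigma /\ x = D d rho sigma).
Definition E_D (D : nat -> Mat -> Mat -> R) (ds : list nat) (k : nat) (rho : Mat) : R :=
  Rinf (fun x => exists s, kprod ds (k - 1) s /\ x = D (dimprod ds) rho s).

Definition qubits (d : nat) : list nat := repeat 2%nat d.
Definition qudit_qubits (d : nat) : list nat := d :: qubits d.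

Definition sigmax : Mat :=
  fun i j => if (Nat.eqb i 0 && Nat.eqb j 1 || Nat.eqb i 1 && Nat.eqb j 0)%bool then C1 else C0.

Definition flip (d i0 : nat) : Mat :=
  kronL (map (fun j => (2%nat, if Nat.eqb j i0 then sigmax else idm 2)) (seq 0 d)).

Definition U_A (d : nat) : Mat :=
  Msum d (fun i => kron (2 ^ d) (projm d i) (flip d i)).

Definition zeros (d : nat) : Mat := kronL (repeat (2%nat, projm 2 0) d).

Definition rho' (d : nat) (rho : Mat) : Mat :=
  let N := (d * 2 ^ d)%nat in
  mmul N (mmul N (U_A d) (kron (2 ^ d) rho (zeros d))) (adj (U_A d)).

(* Fourier matrix: F|j> = 1/sqrt d sum_m e^{2 pi i j m / d}|m>, with paper
   labels j,m in 1..d, i.e. our indices j0 = j-1, m0 = m-1 *)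
Definition Fmat (d : nat) : Mat :=
  fun m0 j0 => if (inb d m0 && inb d j0)%bool then
     Cmul (RtoC (/ sqrt (INR d)))
          (Cexpi (2 * PI * INR ((j0 + 1) * (m0 + 1)) / INR d))
   else C0.

Definition UD (d m0 : nat) : Mat :=
  kronL (map (fun j0 => (2%nat, fun a b =>
      if (Nat.eqb a 0 && Nat.eqb b 0)%bool then C1
      else if (Nat.eqb a 1 && Nat.eqb b 1)%bool
           then Cexpi (- (2 * PI * INR ((j0 + 1) * (m0 + 1)) / INR d))
           else C0)) (seq 0 d)).

Definition Delta_map (d : nat) (X : Mat) : Mat :=
  let Q := (2 ^ d)%nat in let N := (d * Q)%nat in
  let F1 := kron Q (Fmat d) (idm Q) in
  Msum d (fun m0 =>
    mmul Q (mmul Q (UD d m0)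
      (ptrace1 d Q (mmul N (kron Q (projm d m0) (idm Q))
                             (mmul N (mmul N F1 X) (adj F1)))))
      (adj (UD d m0))).

(* The maps rho |-> rho' and rho |-> Delta(rho') act on states of C^d by
   conjugation with an isometry:
   rho' = V1 rho V1^dagger with V1 |c> = |c>|e_c>, and Delta(rho') = V2 rho V2^dagger
   with V2 |c> = |e_c>, where |e_c> is the d-qubit basis state whose only 1 sits on
   qubit c (in Delta the Fourier phases are undone by U_D^(m), and each of the d
   branches contributes rho/d).  Hence both are CPTP, and by contractivity of D
   it suffices that they map I^(k-1) into P^(k), resp. P^(k-1).  A pure state of
   coherence rank r with support S is sent by V1 to a state in which the qudit
   together with the qubits in S forms one block and every other qubit is |0>,
   i.e. to an (r+1)-producible state; V2 drops the qudit, giving an r-producible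
   state. *)

From Stdlib Require Import Reals Lra Lia List Arith FunctionalExtensionality Classical ClassicalEpsilon.
Open Scope R_scope.

Lemma Ceq (a b : Cplx) : re a = re b -> im a = im b -> a = b.
Proof. destruct a, b; simpl; intros; subst; auto. Qed.

Definition Copp (a : Cplx) : Cplx := mkC (- re a) (- im a).
Definition Csub (a b : Cplx) : Cplx := Cadd a (Copp b).

Lemma Cring : ring_theory C0 C1 Cadd Cmul Csub Copp (@eq Cplx).
Proof.
  constructor; intros; apply Ceq; destruct x; try destruct y; try destruct z;
  unfold Cadd, Cmul, Csub, Copp, C0, C1; simpl; ring.
Qed.
Add Ring Cring : Cring.

Lemma Cconj_add a b : Cconj (Cadd a b) = Cadd (Cconj a) (Cconj b).
Proof. apply Ceq; simpl; ring. Qed.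
Lemma Cconj_mul a b : Cconj (Cmul a b) = Cmul (Cconj a) (Cconj b).
Proof. apply Ceq; simpl; ring. Qed.
Lemma Cconj0 : Cconj C0 = C0.
Proof. apply Ceq; simpl; ring. Qed.
Lemma Cconj1 : Cconj C1 = C1.
Proof. apply Ceq; simpl; ring. Qed.
Lemma CconjK a : Cconj (Cconj a) = a.
Proof. apply Ceq; simpl; ring. Qed.
Lemma Cconj_RtoC r : Cconj (RtoC r) = RtoC r.
Proof. apply Ceq; simpl; ring. Qed.

Lemma Cexpi_neg_mul x : Cmul (Cexpi (- x)) (Cexpi x) = C1.
Proof.
  pose proof (sin2_cos2 x) as H; unfold Rsqr in H.
  apply Ceq; simpl; rewrite cos_neg, sin_neg; lra.
Qed.

Lemma Csum_ext n f g : (forall i, (i < n)%nat -> f i = g i) -> Csum n f = Csum n g.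
Proof. induction n; simpl; intros; auto. rewrite IHn, H; auto. Qed.
Lemma Csum_0 n f : (forall i, (i < n)%nat -> f i = C0) -> Csum n f = C0.
Proof. induction n; simpl; intros; auto. rewrite IHn, H; auto. ring. Qed.
Lemma Csum_add n f g : Csum n (fun i => Cadd (f i) (g i)) = Cadd (Csum n f) (Csum n g).
Proof. induction n; simpl; [ring|]. rewrite IHn; ring. Qed.
Lemma Csum_mul_l n c f : Csum n (fun i => Cmul c (f i)) = Cmul c (Csum n f).
Proof. induction n; simpl; [ring|]. rewrite IHn; ring. Qed.
Lemma Csum_mul_r n c f : Csum n (fun i => Cmul (f i) c) = Cmul (Csum n f) c.
Proof. induction n; simpl; [ring|]. rewrite IHn; ring. Qed.
Lemma Csum_conj n f : Cconj (Csum n f) = Csum n (fun i => Cconj (f i)).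
Proof. induction n; simpl. apply Cconj0. rewrite Cconj_add, IHn; auto. Qed.
Lemma Csum_const n c : Csum n (fun _ => c) = Cmul (RtoC (INR n)) c.
Proof.
  induction n; simpl Csum. apply Ceq; simpl; ring.
  rewrite IHn, S_INR. apply Ceq; simpl; ring.
Qed.

Lemma Csum_swap n m (f : nat -> nat -> Cplx) :
  Csum n (fun i => Csum m (f i)) = Csum m (fun j => Csum n (fun i => f i j)).
Proof.
  induction n; simpl. symmetry; apply Csum_0; auto.
  rewrite IHn, <- Csum_add; auto.
Qed.

Lemma Csum_delta n i0 f : (i0 < n)%nat -> (forall i, (i < n)%nat -> i <> i0 -> f i = C0) ->
  Csum n f = f i0.
Proof.
  induction n; intros; [lia|]. simpl.
  destruct (Nat.eq_dec i0 n).
  - subst. rewrite Csum_0. ring. intros; apply H0; lia.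
  - rewrite IHn, (H0 n); [ring | lia | lia | lia | intros; apply H0; lia].
Qed.

Lemma Csum_plus n m f : Csum (n + m) f = Cadd (Csum n f) (Csum m (fun i => f (n + i)%nat)).
Proof.
  induction m; simpl. rewrite Nat.add_0_r; ring.
  rewrite Nat.add_succ_r; simpl. rewrite IHm; ring.
Qed.
Lemma Csum_mul_index m r f :
  Csum (m * r) f = Csum m (fun c => Csum r (fun a => f (c * r + a)%nat)).
Proof.
  induction m; simpl; auto.
  rewrite Nat.add_comm, Csum_plus, IHm. f_equal.
Qed.

Lemma Cprod_shift n f : Cprod (S n) f = Cmul (f O) (Cprod n (fun t => f (S t))).
Proof. induction n; simpl in *. ring. rewrite IHn. ring. Qed.
Lemma Cprod_ext n f g : (forall i, (i < n)%nat -> f i = g i) -> Cprod n f = Cprod n g.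
Proof. induction n; simpl; intros; auto. rewrite IHn, H; auto. Qed.
Lemma Cprod_1 n f : (forall i, (i < n)%nat -> f i = C1) -> Cprod n f = C1.
Proof. induction n; simpl; intros; auto. rewrite IHn, H; auto. ring. Qed.
Lemma Cprod_delta n i0 f : (i0 < n)%nat ->
  Cprod n f = Cmul (f i0) (Cprod n (fun i => if Nat.eqb i i0 then C1 else f i)).
Proof.
  induction n; intros; [lia|]. simpl.
  destruct (Nat.eq_dec i0 n).
  - subst. rewrite Nat.eqb_refl.
    rewrite (Cprod_ext n (fun i => if Nat.eqb i n then C1 else f i) f). ring.
    intros. destruct (Nat.eqb_spec i n); auto; lia.
  - rewrite IHn; try lia. destruct (Nat.eqb_spec n i0); try lia. ring.
Qed.
Lemma Cprod_0 n i0 f : (i0 < n)%nat -> f i0 = C0 -> Cprod n f = C0.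
Proof. intros. rewrite (Cprod_delta n i0); auto. rewrite H0; ring. Qed.

Lemma Rsum_0 n f : (forall i, (i < n)%nat -> f i = 0) -> Rsum n f = 0.
Proof. induction n; simpl; intros; auto. rewrite IHn, H; auto. ring. Qed.

Lemma mod_mul_add i r a : (a < r)%nat -> ((i * r + a) mod r = a)%nat.
Proof. intros. rewrite Nat.add_comm, Nat.Div0.mod_add. apply Nat.mod_small; auto. Qed.
Lemma div_mul_add i r a : (a < r)%nat -> ((i * r + a) / r = i)%nat.
Proof. intros. rewrite Nat.add_comm, Nat.div_add by lia. rewrite Nat.div_small; auto. Qed.
(** * Isometric channels *)

Definition sandwich (n : nat) (V A : Mat) : Mat :=
  fun I J => Csum n (fun i => Csum n (fun j => Cmul (Cmul (V I i) (A i j)) (Cconj (V J j)))).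

Definition mat_vec (n : nat) (V : Mat) (psi : Vec) : Vec :=
  fun I => Csum n (fun c => Cmul (V I c) (psi c)).

Definition isometry (m n : nat) (V : Mat) : Prop :=
  (forall I i, (m <= I)%nat \/ (n <= i)%nat -> V I i = C0) /\
  (forall i j, (i < n)%nat -> (j < n)%nat ->
     Csum m (fun I => Cmul (Cconj (V I i)) (V I j)) = if Nat.eqb i j then C1 else C0).

(* [V (x) 1_r], in the index convention [i * r + a] of [ampl]. *)
Definition kron_idr (r : nat) (V : Mat) : Mat :=
  fun I K => if Nat.eqb (I mod r) (K mod r) then V (I / r)%nat (K / r)%nat else C0.

Lemma quad_sandwich p q W X v :
  quad p (sandwich q W X) v = quad q X (mat_vec p (adj W) v).
Proof.
  unfold quad, sandwich, mat_vec, adj.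
  transitivity (Csum p (fun I => Csum p (fun J => Csum q (fun i => Csum q (fun j =>
     Cmul (Cmul (Cconj (v I)) (W I i)) (Cmul (X i j) (Cmul (Cconj (W J j)) (v J)))))))).
  { apply Csum_ext; intros I _. apply Csum_ext; intros J _.
    rewrite <- Csum_mul_r, <- Csum_mul_l. apply Csum_ext; intros i _.
    rewrite <- Csum_mul_r, <- Csum_mul_l. apply Csum_ext; intros j _. ring. }
  symmetry.
  transitivity (Csum q (fun i => Csum q (fun j => Csum p (fun I => Csum p (fun J =>
     Cmul (Cmul (Cconj (v I)) (W I i)) (Cmul (X i j) (Cmul (Cconj (W J j)) (v J)))))))).
  { apply Csum_ext; intros i _. apply Csum_ext; intros j _.
    rewrite Csum_conj, <- Csum_mul_r. apply Csum_ext; intros I _.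
    rewrite <- !Csum_mul_l. apply Csum_ext; intros J _. rewrite Cconj_mul, CconjK. ring. }
  rewrite (Csum_ext q _ (fun i => Csum p (fun I => Csum q (fun j => Csum p (fun J =>
     Cmul (Cmul (Cconj (v I)) (W I i)) (Cmul (X i j) (Cmul (Cconj (W J j)) (v J)))))))).
  2:{ intros i _. apply Csum_swap. }
  rewrite Csum_swap. apply Csum_ext; intros I _.
  rewrite (Csum_ext q _ (fun i => Csum p (fun J => Csum q (fun j =>
     Cmul (Cmul (Cconj (v I)) (W I i)) (Cmul (X i j) (Cmul (Cconj (W J j)) (v J))))))).
  2:{ intros i _. apply Csum_swap. }
  apply Csum_swap.
Qed.

Lemma sandwich_mmul N n M V A :
  mmul N (mmul N M (sandwich n V A)) (adj M) = sandwich n (mmul N M V) A.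
Proof.
  extensionality I; extensionality J. unfold mmul, sandwich, adj.
  transitivity (Csum N (fun L => Csum N (fun K => Csum n (fun i => Csum n (fun j =>
    Cmul (Cmul (Cmul (M I K) (V K i)) (A i j)) (Cconj (Cmul (M J L) (V L j)))))))).
  { apply Csum_ext; intros L _. rewrite <- Csum_mul_r. apply Csum_ext; intros K _.
    rewrite <- Csum_mul_l, <- Csum_mul_r. apply Csum_ext; intros i _.
    rewrite <- Csum_mul_l, <- Csum_mul_r. apply Csum_ext; intros j _.
    rewrite Cconj_mul. ring. }
  symmetry.
  transitivity (Csum n (fun i => Csum n (fun j => Csum N (fun L => Csum N (fun K =>
    Cmul (Cmul (Cmul (M I K) (V K i)) (A i j)) (Cconj (Cmul (M J L) (V L j)))))))).
  { apply Csum_ext; intros i _. apply Csum_ext; intros j _.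
    rewrite Csum_conj, <- Csum_mul_l. apply Csum_ext; intros L _.
    rewrite <- !Csum_mul_r. apply Csum_ext; intros K _. ring. }
  rewrite (Csum_ext n _ (fun i => Csum N (fun L => Csum n (fun j => Csum N (fun K =>
    Cmul (Cmul (Cmul (M I K) (V K i)) (A i j)) (Cconj (Cmul (M J L) (V L j)))))))).
  2:{ intros; apply Csum_swap. }
  rewrite Csum_swap. apply Csum_ext; intros L _.
  rewrite (Csum_ext n _ (fun i => Csum N (fun K => Csum n (fun j =>
    Cmul (Cmul (Cmul (M I K) (V K i)) (A i j)) (Cconj (Cmul (M J L) (V L j))))))).
  2:{ intros; apply Csum_swap. }
  apply Csum_swap.
Qed.

Lemma sandwich_ext n V W A : (forall I c, (c < n)%nat -> V I c = W I c) ->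
  sandwich n V A = sandwich n W A.
Proof.
  intros H. extensionality I; extensionality J. unfold sandwich.
  apply Csum_ext; intros i Hi; apply Csum_ext; intros j Hj. rewrite !H; auto.
Qed.

Lemma sandwich_outer n V psi : sandwich n V (outer psi) = outer (mat_vec n V psi).
Proof.
  extensionality I; extensionality J. unfold sandwich, outer, mat_vec.
  rewrite Csum_conj, <- Csum_mul_r. apply Csum_ext; intros i _. rewrite <- Csum_mul_l.
  apply Csum_ext; intros j _. rewrite Cconj_mul. ring.
Qed.

Lemma sandwich_mixture n V L (p : nat -> R) (psi : nat -> Vec) :
  sandwich n V (Msum L (fun l => mscale (RtoC (p l)) (outer (psi l)))) =
  Msum L (fun l => mscale (RtoC (p l)) (outer (mat_vec n V (psi l)))).
Proof.
  extensionality I; extensionality J. unfold Msum, mscale.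
  rewrite (Csum_ext L _ (fun l => Cmul (RtoC (p l)) (sandwich n V (outer (psi l)) I J))).
  2:{ intros; rewrite sandwich_outer; reflexivity. }
  unfold sandwich.
  transitivity (Csum n (fun i => Csum n (fun j => Csum L (fun l =>
     Cmul (RtoC (p l)) (Cmul (Cmul (V I i) (outer (psi l) i j)) (Cconj (V J j))))))).
  { apply Csum_ext; intros; apply Csum_ext; intros. rewrite <- Csum_mul_l, <- Csum_mul_r.
    apply Csum_ext; intros. ring. }
  rewrite (Csum_ext n _ (fun i => Csum L (fun l => Csum n (fun j =>
     Cmul (RtoC (p l)) (Cmul (Cmul (V I i) (outer (psi l) i j)) (Cconj (V J j))))))).
  2:{ intros; apply Csum_swap. }
  rewrite Csum_swap. apply Csum_ext; intros l _.
  rewrite <- Csum_mul_l. apply Csum_ext; intros. rewrite <- Csum_mul_l. reflexivity.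
Qed.

Lemma vnorm2_Csum n w : vnorm2 n w = re (Csum n (fun i => Cmul (Cconj (w i)) (w i))).
Proof. unfold vnorm2. induction n; simpl; auto. rewrite IHn. unfold Cnorm2. ring. Qed.

Section IsometricChannel.
Variables (m n : nat) (V : Mat).
Hypothesis HV : isometry m n V.

Lemma isometry_sandwich_supported A : supported m (sandwich n V A).
Proof.
  destruct HV as [Hs _]. intros I J HIJ. unfold sandwich.
  apply Csum_0; intros i Hi. apply Csum_0; intros j Hj.
  destruct HIJ as [H|H].
  - rewrite (Hs I i); auto. ring.
  - rewrite (Hs J j); auto. rewrite Cconj0; ring.
Qed.

Lemma isometry_sandwich_trace A : trace m (sandwich n V A) = trace n A.
Proof.
  destruct HV as [_ Hu]. unfold trace, sandwich.
  rewrite Csum_swap. apply Csum_ext; intros i Hi.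
  rewrite Csum_swap, (Csum_delta n i); auto.
  - rewrite (Csum_ext m _ (fun I => Cmul (A i i) (Cmul (Cconj (V I i)) (V I i)))).
    + rewrite Csum_mul_l, Hu, Nat.eqb_refl; auto. ring.
    + intros; ring.
  - intros j Hj Hji.
    rewrite (Csum_ext m _ (fun I => Cmul (A i j) (Cmul (Cconj (V I j)) (V I i)))).
    + rewrite Csum_mul_l, Hu; auto. destruct (Nat.eqb_spec j i); try lia. ring.
    + intros; ring.
Qed.

Lemma ampl_sandwich r X I J : (0 < r)%nat -> (I < m * r)%nat -> (J < m * r)%nat ->
  ampl n m r (sandwich n V) X I J = sandwich (n * r) (kron_idr r V) X I J.
Proof.
  intros Hr HI HJ.
  assert (HIr : (I mod r < r)%nat) by (apply Nat.mod_upper_bound; lia).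
  assert (HJr : (J mod r < r)%nat) by (apply Nat.mod_upper_bound; lia).
  unfold ampl, inb. rewrite (proj2 (Nat.ltb_lt _ _) HI), (proj2 (Nat.ltb_lt _ _) HJ). simpl.
  unfold sandwich, block, kron_idr. rewrite Csum_mul_index.
  apply Csum_ext; intros i Hi.
  rewrite (Csum_delta r (I mod r)); auto.
  2:{ intros a Ha Hne. apply Csum_0; intros K HK.
      rewrite mod_mul_add by auto. destruct (Nat.eqb_spec (I mod r) a); try lia. ring. }
  rewrite mod_mul_add, div_mul_add, Nat.eqb_refl, Csum_mul_index by auto.
  apply Csum_ext; intros j Hj.
  rewrite (Csum_delta r (J mod r)); auto.
  2:{ intros a Ha Hne. rewrite mod_mul_add by auto.
      destruct (Nat.eqb_spec (J mod r) a); try lia. rewrite Cconj0. ring. }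
  rewrite mod_mul_add, div_mul_add, Nat.eqb_refl by auto.
  unfold inb. rewrite (proj2 (Nat.ltb_lt i n) Hi), (proj2 (Nat.ltb_lt j n) Hj). reflexivity.
Qed.

Lemma CPTP_sandwich : CPTP n m (sandwich n V).
Proof.
  split; [|split; [|split; [|split]]].
  - intros; apply isometry_sandwich_supported.
  - intros A B _ _. extensionality I; extensionality J. unfold sandwich, madd.
    rewrite <- Csum_add. apply Csum_ext; intros i _.
    rewrite <- Csum_add. apply Csum_ext; intros j _. ring.
  - intros c A _. extensionality I; extensionality J. unfold sandwich, mscale.
    rewrite <- Csum_mul_l. apply Csum_ext; intros i _.
    rewrite <- Csum_mul_l. apply Csum_ext; intros j _. ring.
  - intros; apply isometry_sandwich_trace.
  - intros r X Hr [HXs HX]. split.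
    + intros I J HIJ. unfold ampl, inb.
      destruct HIJ as [H|H]; rewrite (proj2 (Nat.ltb_ge _ _) H);
        [reflexivity | rewrite Bool.andb_false_r; reflexivity].
    + intros v.
      assert (E : quad (m * r) (ampl n m r (sandwich n V) X) v =
                  quad (m * r) (sandwich (n * r) (kron_idr r V) X) v).
      { unfold quad. apply Csum_ext; intros I HI. apply Csum_ext; intros J HJ.
        rewrite ampl_sandwich; auto. }
      rewrite E, quad_sandwich. apply HX.
Qed.

Lemma isometry_unitV psi : unitV n psi -> unitV m (mat_vec n V psi).
Proof.
  destruct HV as [Hs Hu]. intros [Hps Hn]. split.
  - intros I HI. unfold mat_vec. apply Csum_0; intros. rewrite Hs; auto. ring.
  - assert (E : Csum m (fun I => Cmul (Cconj (mat_vec n V psi I)) (mat_vec n V psi I)) =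
                Csum n (fun i => Cmul (Cconj (psi i)) (psi i))).
    { unfold mat_vec.
      transitivity (Csum m (fun I => Csum n (fun i => Csum n (fun j =>
        Cmul (Cmul (Cconj (psi i)) (psi j)) (Cmul (Cconj (V I i)) (V I j)))))).
      { apply Csum_ext; intros. rewrite Csum_conj, <- Csum_mul_r. apply Csum_ext; intros.
        rewrite <- Csum_mul_l. apply Csum_ext; intros. rewrite Cconj_mul. ring. }
      rewrite Csum_swap. apply Csum_ext; intros i Hi. rewrite Csum_swap.
      rewrite (Csum_delta n i); auto.
      - rewrite Csum_mul_l, Hu, Nat.eqb_refl; auto. ring.
      - intros j Hj Hne. rewrite Csum_mul_l, Hu; auto. destruct (Nat.eqb_spec i j); try lia. ring. }
    rewrite vnorm2_Csum, E, <- vnorm2_Csum. exact Hn.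
Qed.

End IsometricChannel.

Lemma CPTP_density n m Phi A : CPTP n m Phi -> density n A -> density m (Phi A).
Proof.
  intros [Hs [_ [_ [Ht Hp]]]] [[HAs HA] HAt]. split; [|rewrite Ht; auto].
  assert (HP := Hp 1%nat A Nat.lt_0_1). rewrite !Nat.mul_1_r in HP.
  assert (Hb : block n 1 A 0 0 = A).
  { extensionality i; extensionality j. unfold block, inb.
    destruct (Nat.ltb_spec i n), (Nat.ltb_spec j n); simpl;
      rewrite ?Nat.mul_1_r, ?Nat.add_0_r; auto; symmetry; apply HAs; auto. }
  assert (Ha : ampl n m 1 Phi A = Phi A).
  { extensionality I; extensionality J. unfold ampl.
    rewrite !Nat.mod_1_r, !Nat.div_1_r, Hb, Nat.mul_1_r.
    unfold inb. destruct (Nat.ltb_spec I m), (Nat.ltb_spec J m); simpl; auto;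
      symmetry; apply Hs; auto. }
  rewrite <- Ha. apply HP. split; auto.
Qed.

Lemma CPTP_ext n m Phi Psi :
  (forall A, supported n A -> Phi A = Psi A) -> CPTP n m Psi -> CPTP n m Phi.
Proof.
  intros E [H1 [H2 [H3 [H4 H5]]]].
  assert (Hadd : forall A B, supported n A -> supported n B -> supported n (madd A B)).
  { intros A B HA HB i j H. unfold madd. rewrite HA, HB by auto. apply Ceq; simpl; ring. }
  assert (Hscale : forall c A, supported n A -> supported n (mscale c A)).
  { intros c A HA i j H. unfold mscale. rewrite HA by auto. apply Ceq; simpl; ring. }
  split; [|split; [|split; [|split]]].
  - intros A HA. rewrite E; auto.
  - intros A B HA HB. rewrite !E; auto.
  - intros c A HA. rewrite !E; auto.
  - intros A HA. rewrite E; auto.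
  - intros r X Hr HX. replace (ampl n m r Phi X) with (ampl n m r Psi X); auto.
    extensionality I; extensionality J. unfold ampl. rewrite E; auto.
    intros i j Hij. unfold block, inb. destruct Hij as [H|H].
    + rewrite (proj2 (Nat.ltb_ge _ _) H). reflexivity.
    + rewrite (proj2 (Nat.ltb_ge _ _) H), Bool.andb_false_r. reflexivity.
Qed.

Definition bitn (e I : nat) : nat := Nat.b2n (Nat.testbit I e).

(* Qubit [c] of a [d]-qubit basis index; qubit [0] is the most significant one,
   as in [kronL]. *)
Definition qbit (d c I : nat) : nat := bitn (d - 1 - c) I.

(* The basis index of [|0...010...0>] with its [1] on qubit [c]. *)
Definition onehot (d c : nat) : nat := (2 ^ (d - 1 - c))%nat.

Lemma bitn_le1 e I : (bitn e I <= 1)%nat.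
Proof. unfold bitn. destruct (Nat.testbit I e); simpl; lia. Qed.
Lemma bitn_mod e n I : (e < n)%nat -> bitn e (I mod 2 ^ n) = bitn e I.
Proof. intros. unfold bitn. rewrite Nat.mod_pow2_bits_low; auto. Qed.
Lemma bitn_top n I : (I < 2 ^ S n)%nat -> bitn n I = (I / 2 ^ n)%nat.
Proof.
  intros. unfold bitn. rewrite Nat.testbit_spec'. apply Nat.mod_small.
  apply Nat.Div0.div_lt_upper_bound. rewrite Nat.pow_succ_r' in H. lia.
Qed.

Lemma pow2_pos d : (0 < 2 ^ d)%nat.
Proof. apply Nat.neq_0_lt_0, Nat.pow_nonzero; lia. Qed.

Lemma qbit_01 d c I : qbit d c I = 0%nat \/ qbit d c I = 1%nat.
Proof. pose proof (bitn_le1 (d - 1 - c) I). unfold qbit. lia. Qed.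
Lemma qbit_0 d c : qbit d c 0 = 0%nat.
Proof. unfold qbit, bitn. rewrite Nat.bits_0. auto. Qed.
Lemma qbit_mod d c I : (c < d)%nat -> qbit d c (I mod 2 ^ d) = qbit d c I.
Proof. intros. apply bitn_mod. lia. Qed.

Lemma onehot_lt d c : (c < d)%nat -> (onehot d c < 2 ^ d)%nat.
Proof. intros. apply Nat.pow_lt_mono_r; lia. Qed.
Lemma onehot_inj d c c' : (c < d)%nat -> (c' < d)%nat -> onehot d c = onehot d c' -> c = c'.
Proof. unfold onehot. intros Hc Hc' E. apply Nat.pow_inj_r in E; lia. Qed.
Lemma qbit_onehot d q c : (q < d)%nat -> (c < d)%nat ->
  qbit d q (onehot d c) = if Nat.eqb q c then 1%nat else 0%nat.
Proof.
  intros. unfold qbit, onehot, bitn. rewrite Nat.pow2_bits_eqb.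
  destruct (Nat.eqb_spec (d - 1 - c) (d - 1 - q)), (Nat.eqb_spec q c); auto; lia.
Qed.

Lemma qbit_inj d a b : (a < 2 ^ d)%nat -> (b < 2 ^ d)%nat ->
  (forall c, (c < d)%nat -> qbit d c a = qbit d c b) -> a = b.
Proof.
  intros Ha Hb H. apply Nat.bits_inj_iff. intro e.
  destruct (Nat.lt_ge_cases e d) as [He|He].
  - specialize (H (d - 1 - e)%nat ltac:(lia)). unfold qbit, bitn in H.
    replace (d - 1 - (d - 1 - e))%nat with e in H by lia.
    destruct (Nat.testbit a e), (Nat.testbit b e); simpl in H; auto; lia.
  - rewrite <- (Nat.mod_small a (2 ^ d)), <- (Nat.mod_small b (2 ^ d)) by auto.
    rewrite !Nat.mod_pow2_bits_high; auto.
Qed.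

Lemma qbit_differ d a b : (a < 2 ^ d)%nat -> (b < 2 ^ d)%nat -> a <> b ->
  exists c, (c < d)%nat /\ qbit d c a <> qbit d c b.
Proof.
  intros Ha Hb Hne. apply NNPP; intro H. apply Hne, (qbit_inj d); auto.
  intros c Hc. apply NNPP; intro H2. apply H. eauto.
Qed.

Lemma dimL_qubits n s (g : nat -> Mat) :
  dimL (map (fun j => (2%nat, g j)) (seq s n)) = (2 ^ n)%nat.
Proof. revert s; induction n; intros; simpl; auto. Qed.

Lemma kronL_qubits_supported n s (g : nat -> Mat) : (forall t, supported 2 (g t)) ->
  supported (2 ^ n) (kronL (map (fun j => (2%nat, g j)) (seq s n))).
Proof.
  revert s; induction n; intros s Hg I J HIJ; simpl.
  - unfold idm, inb. simpl in HIJ. destruct (Nat.eqb_spec I J); simpl; auto.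
    subst. destruct HIJ; destruct (Nat.ltb_spec J 1); simpl; auto; lia.
  - unfold kron. rewrite dimL_qubits. rewrite Nat.pow_succ_r' in HIJ.
    rewrite (Hg s). ring.
    destruct HIJ; [left|right]; apply Nat.div_le_lower_bound; try apply Nat.pow_nonzero; lia.
Qed.

Lemma kronL_qubits_entry n s (g : nat -> Mat) I J : (I < 2 ^ n)%nat -> (J < 2 ^ n)%nat ->
  kronL (map (fun j => (2%nat, g j)) (seq s n)) I J =
  Cprod n (fun t => g (s + t)%nat (qbit n t I) (qbit n t J)).
Proof.
  revert s I J; induction n; intros s I J HI HJ.
  - simpl in *. unfold idm, inb.
    replace I with 0%nat by lia. replace J with 0%nat by lia. reflexivity.
  - simpl (kronL _). unfold kron. rewrite dimL_qubits, Cprod_shift.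
    rewrite IHn by (apply Nat.mod_upper_bound, Nat.pow_nonzero; lia).
    unfold qbit. f_equal.
    + rewrite Nat.add_0_r. replace (S n - 1 - 0)%nat with n by lia. rewrite !bitn_top; auto.
    + apply Cprod_ext; intros t Ht. replace (S s + t)%nat with (s + S t)%nat by lia.
      replace (S n - 1 - S t)%nat with (n - 1 - t)%nat by lia.
      rewrite !bitn_mod by lia. auto.
Qed.

(* The matrix of [|c> |-> |f c>]; an isometry when [f] is injective on [0..n-1]. *)
Definition embed (n : nat) (f : nat -> nat) : Mat :=
  fun I c => if (Nat.eqb I (f c) && Nat.ltb c n)%bool then C1 else C0.

Section Embedding.
Variables (n : nat) (f : nat -> nat).
Hypothesis f_inj : forall c c', (c < n)%nat -> (c' < n)%nat -> f c = f c' -> c = c'.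

Lemma embed_hit I c : (c < n)%nat -> embed n f I c = if Nat.eqb I (f c) then C1 else C0.
Proof. intros Hc. unfold embed. rewrite (proj2 (Nat.ltb_lt _ _) Hc), Bool.andb_true_r. auto. Qed.

Lemma embed_out I c : (n <= c)%nat -> embed n f I c = C0.
Proof. intros Hc. unfold embed. rewrite (proj2 (Nat.ltb_ge _ _) Hc), Bool.andb_false_r. auto. Qed.

Lemma embed_miss I c : (forall c', (c' < n)%nat -> I <> f c') -> embed n f I c = C0.
Proof.
  intros H. unfold embed. destruct (Nat.ltb_spec c n); [|rewrite Bool.andb_false_r; auto].
  destruct (Nat.eqb_spec I (f c)); auto. exfalso; apply (H c); auto.
Qed.

Lemma isometry_embed m : (forall c, (c < n)%nat -> (f c < m)%nat) -> isometry m n (embed n f).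
Proof.
  intros Hf. split.
  - intros I c H. unfold embed. destruct (Nat.ltb_spec c n); [|rewrite Bool.andb_false_r; auto].
    destruct (Nat.eqb_spec I (f c)); auto. specialize (Hf c H0). lia.
  - intros i j Hi Hj. rewrite (Csum_delta _ (f i)); auto.
    + rewrite !embed_hit, Nat.eqb_refl by auto.
      destruct (Nat.eqb_spec (f i) (f j)) as [E|E], (Nat.eqb_spec i j) as [F|F];
        rewrite ?Cconj1; try ring.
      * exfalso; auto.
      * subst; contradiction.
    + intros I _ Hne. rewrite embed_hit by auto.
      destruct (Nat.eqb_spec I (f i)); try contradiction. rewrite Cconj0. ring.
Qed.

Lemma mat_vec_embed_hit psi x : (x < n)%nat -> mat_vec n (embed n f) psi (f x) = psi x.
Proof.
  intros Hx. unfold mat_vec. rewrite (Csum_delta n x); auto.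
  - rewrite embed_hit, Nat.eqb_refl by auto. ring.
  - intros c Hc Hne. rewrite embed_hit by auto.
    destruct (Nat.eqb_spec (f x) (f c)) as [E|E]; [|ring].
    exfalso. apply Hne. symmetry. auto.
Qed.

Lemma mat_vec_embed_miss psi I : (forall c, (c < n)%nat -> I <> f c) ->
  mat_vec n (embed n f) psi I = C0.
Proof. intros H. unfold mat_vec. apply Csum_0. intros c Hc. rewrite embed_miss; auto. ring. Qed.

Lemma sandwich_embed_hit A i j : (i < n)%nat -> (j < n)%nat ->
  sandwich n (embed n f) A (f i) (f j) = A i j.
Proof.
  intros Hi Hj. unfold sandwich. rewrite (Csum_delta n i); auto.
  - rewrite (Csum_delta n j); auto.
    + rewrite !embed_hit, !Nat.eqb_refl, Cconj1 by auto. ring.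
    + intros c Hc Hne. rewrite (embed_hit (f j)) by auto.
      destruct (Nat.eqb_spec (f j) (f c)) as [E|E]; [exfalso; apply Hne; symmetry; auto|].
      rewrite Cconj0. ring.
  - intros c Hc Hne. apply Csum_0; intros c' _. rewrite (embed_hit (f i)) by auto.
    destruct (Nat.eqb_spec (f i) (f c)) as [E|E]; [exfalso; apply Hne; symmetry; auto|]. ring.
Qed.

Lemma sandwich_embed_miss A I J :
  (forall c, (c < n)%nat -> I <> f c) \/ (forall c, (c < n)%nat -> J <> f c) ->
  sandwich n (embed n f) A I J = C0.
Proof.
  intros H. unfold sandwich. apply Csum_0; intros i _. apply Csum_0; intros j _.
  destruct H as [H|H].
  - rewrite (embed_miss I i) by auto. ring.
  - rewrite (embed_miss J j), Cconj0 by auto. ring.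
Qed.

End Embedding.

(** * The maps [rho'] and [Delta] *)

Lemma flip_col0 d c a : (c < d)%nat -> (a < 2 ^ d)%nat ->
  flip d c a 0%nat = if Nat.eqb a (onehot d c) then C1 else C0.
Proof.
  intros Hc Ha. unfold flip. rewrite kronL_qubits_entry by (auto; apply pow2_pos).
  destruct (Nat.eqb_spec a (onehot d c)) as [->|Hne].
  - apply Cprod_1. intros t Ht. rewrite qbit_0, qbit_onehot by auto. simpl.
    destruct (Nat.eqb_spec t c); reflexivity.
  - destruct (qbit_differ d a (onehot d c)) as [t [Ht Hd]]; auto using onehot_lt.
    apply (Cprod_0 d t); auto. rewrite qbit_0. rewrite qbit_onehot in Hd by auto. simpl.
    destruct (Nat.eqb_spec t c), (qbit_01 d t a) as [E|E]; rewrite E in *; try lia; reflexivity.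
Qed.

Lemma map_const_seq {A} (x : A) s n : map (fun _ => x) (seq s n) = repeat x n.
Proof. revert s; induction n; intros; simpl; auto. rewrite IHn; auto. Qed.

Lemma zeros_entry d a b : (a < 2 ^ d)%nat -> (b < 2 ^ d)%nat ->
  zeros d a b = if (Nat.eqb a 0 && Nat.eqb b 0)%bool then C1 else C0.
Proof.
  intros Ha Hb. unfold zeros.
  rewrite <- (map_const_seq (2%nat, projm 2 0) 0 d).
  rewrite kronL_qubits_entry by auto.
  assert (Hnz : forall x, (x < 2 ^ d)%nat -> x <> 0%nat ->
            exists t, (t < d)%nat /\ qbit d t x = 1%nat).
  { intros x Hx Hx0. destruct (qbit_differ d x 0) as [t [Ht Hd]]; auto using pow2_pos.
    rewrite qbit_0 in Hd. exists t. destruct (qbit_01 d t x); split; auto; lia. }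
  destruct (Nat.eqb_spec a 0) as [->|Ha0].
  - destruct (Nat.eqb_spec b 0) as [->|Hb0].
    + apply Cprod_1. intros t Ht. rewrite qbit_0. reflexivity.
    + destruct (Hnz b Hb Hb0) as [t [Ht Bt]]. apply (Cprod_0 d t); auto.
      unfold projm. rewrite Bt, Bool.andb_false_r. reflexivity.
  - destruct (Hnz a Ha Ha0) as [t [Ht At]]. apply (Cprod_0 d t); auto.
    unfold projm. rewrite At. reflexivity.
Qed.

Definition UD_phase (d m0 c : nat) : Cplx :=
  Cexpi (- (2 * PI * INR ((c + 1) * (m0 + 1)) / INR d)).

Lemma UD_col d m0 t c : (c < d)%nat ->
  UD d m0 t (onehot d c) = if Nat.eqb t (onehot d c) then UD_phase d m0 c else C0.
Proof.
  intros Hc. pose proof (onehot_lt d c Hc) as He. unfold UD.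
  destruct (Nat.lt_ge_cases t (2 ^ d)) as [Ht|Ht].
  2:{ rewrite kronL_qubits_supported.
      - destruct (Nat.eqb_spec t (onehot d c)); auto. lia.
      - intros j a b Hab. destruct (Nat.eqb_spec a 0), (Nat.eqb_spec b 0),
          (Nat.eqb_spec a 1), (Nat.eqb_spec b 1); simpl; auto; lia.
      - auto. }
  rewrite kronL_qubits_entry by auto.
  destruct (Nat.eqb_spec t (onehot d c)) as [->|Hne].
  - rewrite (Cprod_delta d c), qbit_onehot, Nat.eqb_refl by auto. simpl.
    rewrite Cprod_1. unfold UD_phase. ring.
    intros i Hi. rewrite qbit_onehot by auto. destruct (Nat.eqb_spec i c); auto.
  - destruct (qbit_differ d t (onehot d c)) as [j [Hj Hd]]; auto.
    apply (Cprod_0 d j); auto. simpl. rewrite qbit_onehot in * by auto.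
    destruct (Nat.eqb_spec j c), (qbit_01 d j t) as [E|E]; rewrite E in *; try lia; reflexivity.
Qed.

Definition copy_iso (d : nat) : Mat := embed d (fun c => (c * 2 ^ d + onehot d c)%nat).
Definition onehot_iso (d : nat) : Mat := embed d (onehot d).

Lemma copy_iso_inj d c c' : (c < d)%nat -> (c' < d)%nat ->
  (c * 2 ^ d + onehot d c = c' * 2 ^ d + onehot d c')%nat -> c = c'.
Proof.
  intros Hc Hc' E.
  rewrite <- (div_mul_add c (2 ^ d) (onehot d c)), E by auto using onehot_lt.
  apply div_mul_add, onehot_lt; auto.
Qed.

Lemma isometry_copy_iso d : isometry (d * 2 ^ d) d (copy_iso d).
Proof.
  apply isometry_embed; [apply copy_iso_inj|].
  intros c Hc. pose proof (onehot_lt d c Hc). nia.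
Qed.

Lemma isometry_onehot_iso d : isometry (2 ^ d) d (onehot_iso d).
Proof. apply isometry_embed; [apply onehot_inj | apply onehot_lt]. Qed.

Lemma kron_zeros d A : supported d A ->
  kron (2 ^ d) A (zeros d) = sandwich d (embed d (fun c => (c * 2 ^ d)%nat)) A.
Proof.
  intros HA. pose proof (pow2_pos d) as HQ.
  assert (Hinj : forall c c', (c < d)%nat -> (c' < d)%nat -> (c * 2 ^ d = c' * 2 ^ d)%nat -> c = c')
    by (intros c c' _ _; apply Nat.mul_cancel_r; lia).
  assert (Hmiss : forall K, (K mod 2 ^ d <> 0 \/ d <= K / 2 ^ d)%nat ->
                  forall c, (c < d)%nat -> K <> (c * 2 ^ d)%nat).
  { intros K HK c Hc ->. rewrite Nat.Div0.mod_mul, Nat.div_mul in HK by lia. lia. }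
  extensionality K; extensionality L. unfold kron.
  rewrite zeros_entry by (apply Nat.mod_upper_bound; lia).
  pose proof (Nat.div_mod K (2 ^ d) ltac:(lia)) as EK.
  pose proof (Nat.div_mod L (2 ^ d) ltac:(lia)) as EL.
  destruct (Nat.eqb_spec (K mod 2 ^ d) 0) as [K0|K0];
    [|rewrite sandwich_embed_miss by (left; apply Hmiss; auto); simpl; ring].
  destruct (Nat.eqb_spec (L mod 2 ^ d) 0) as [L0|L0];
    [|rewrite sandwich_embed_miss by (right; apply Hmiss; auto); simpl; ring].
  destruct (Nat.lt_ge_cases (K / 2 ^ d) d) as [HK|HK].
  2:{ rewrite HA, sandwich_embed_miss by (auto; left; apply Hmiss; auto). ring. }
  destruct (Nat.lt_ge_cases (L / 2 ^ d) d) as [HL|HL].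
  2:{ rewrite (HA (K / 2 ^ d)%nat), sandwich_embed_miss by (auto; right; apply Hmiss; auto). ring. }
  replace (sandwich d _ A K L) with
    (sandwich d (embed d (fun c => (c * 2 ^ d)%nat)) A (K / 2 ^ d * 2 ^ d)%nat (L / 2 ^ d * 2 ^ d)%nat)
    by (f_equal; lia).
  rewrite (sandwich_embed_hit d (fun c => (c * 2 ^ d)%nat) Hinj) by auto. simpl. ring.
Qed.

Lemma U_A_zero_col d I c : (c < d)%nat ->
  mmul (d * 2 ^ d) (U_A d) (embed d (fun c => (c * 2 ^ d)%nat)) I c = copy_iso d I c.
Proof.
  intros Hc. pose proof (pow2_pos d) as HQ. pose proof (onehot_lt d c Hc) as He.
  unfold mmul. rewrite (Csum_delta _ (c * 2 ^ d)); [| nia |].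
  2:{ intros K _ Hne. rewrite embed_hit by auto. destruct (Nat.eqb_spec K (c * 2 ^ d)); try lia. ring. }
  rewrite embed_hit, Nat.eqb_refl by auto.
  unfold U_A, Msum, kron. rewrite Nat.div_mul, Nat.Div0.mod_mul by lia.
  rewrite (Csum_delta d c); auto.
  2:{ intros i _ Hne. unfold projm. destruct (Nat.eqb_spec c i); try lia.
      rewrite Bool.andb_false_r. simpl. ring. }
  rewrite flip_col0 by (auto; apply Nat.mod_upper_bound; lia).
  unfold copy_iso. rewrite embed_hit by auto.
  unfold projm, inb. rewrite Nat.eqb_refl, (proj2 (Nat.ltb_lt _ _) Hc), !Bool.andb_true_r.
  pose proof (Nat.div_mod I (2 ^ d) ltac:(lia)) as EI.
  destruct (Nat.eqb_spec (I / 2 ^ d) c) as [E1|E1],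
    (Nat.eqb_spec (I mod 2 ^ d) (onehot d c)) as [E2|E2],
    (Nat.eqb_spec I (c * 2 ^ d + onehot d c)) as [E3|E3]; try ring;
  exfalso; first [ apply E3; rewrite EI at 1; rewrite E1, E2; ring
                 | apply E2; rewrite E3; apply mod_mul_add; auto
                 | apply E1; rewrite E3; apply div_mul_add; auto ].
Qed.

Lemma rho'_sandwich d A : supported d A -> rho' d A = sandwich d (copy_iso d) A.
Proof.
  intros HA. unfold rho'. rewrite kron_zeros, sandwich_mmul by auto.
  apply sandwich_ext. intros; apply U_A_zero_col; auto.
Qed.

(* The block [(<m0| (x) 1) G] of a matrix [G] on [C^n (x) C^Q]. *)
Definition qudit_row (Q : nat) (G : Mat) (m0 : nat) : Mat :=
  fun s c => if inb Q s then G (m0 * Q + s)%nat c else C0.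

Lemma ptrace1_project_sandwich n Q G A m0 : (0 < Q)%nat -> (m0 < n)%nat ->
  ptrace1 n Q (mmul (n * Q) (kron Q (projm n m0) (idm Q)) (sandwich n G A)) =
  sandwich n (qudit_row Q G m0) A.
Proof.
  intros HQ Hm0.
  extensionality s; extensionality s'. unfold ptrace1, qudit_row, inb.
  destruct (Nat.ltb_spec s Q) as [Hs|Hs]; simpl.
  2:{ unfold sandwich. rewrite Csum_0; auto. intros; apply Csum_0; intros.
      rewrite (proj2 (Nat.ltb_ge _ _) Hs). ring. }
  destruct (Nat.ltb_spec s' Q) as [Hs'|Hs']; simpl.
  2:{ unfold sandwich. rewrite Csum_0; auto. intros; apply Csum_0; intros.
      rewrite (proj2 (Nat.ltb_ge _ _) Hs'), Cconj0. ring. }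
  rewrite (Csum_delta n m0); auto.
  2:{ intros a Ha Hne. unfold mmul. apply Csum_0; intros K HK. unfold kron, projm.
      rewrite div_mul_add by auto. destruct (Nat.eqb_spec a m0); try lia. simpl. ring. }
  unfold mmul. rewrite (Csum_delta _ (m0 * Q + s)%nat); [| nia |].
  - unfold kron, projm, idm, inb. rewrite !div_mul_add, !mod_mul_add by auto.
    rewrite Nat.eqb_refl, (proj2 (Nat.ltb_lt _ _) Hm0), (proj2 (Nat.ltb_lt _ _) Hs). simpl.
    unfold sandwich. rewrite <- Csum_mul_l. apply Csum_ext; intros.
    rewrite <- Csum_mul_l. apply Csum_ext; intros.
    rewrite (proj2 (Nat.ltb_lt _ _) Hs), (proj2 (Nat.ltb_lt _ _) Hs'), Nat.eqb_refl. simpl. ring.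
  - intros K HK Hne. unfold kron, projm, idm, inb. rewrite !div_mul_add, !mod_mul_add by auto.
    pose proof (Nat.div_mod K Q ltac:(lia)) as EK.
    destruct (Nat.eqb_spec (K / Q) m0) as [E1|E1]; destruct (Nat.eqb_spec s (K mod Q)) as [E2|E2];
      simpl; rewrite ?Bool.andb_false_r; simpl; try ring.
    exfalso. apply Hne. rewrite EK at 1. rewrite E1, <- E2. ring.
Qed.

Section FourierDephasing.
Variable d : nat.
Let Q := (2 ^ d)%nat.
Let FG := mmul (d * Q) (kron Q (Fmat d) (idm Q)) (copy_iso d).

Lemma fourier_copy_entry m0 s c : (m0 < d)%nat -> (s < Q)%nat -> (c < d)%nat ->
  FG (m0 * Q + s)%nat c = if Nat.eqb s (onehot d c) then Fmat d m0 c else C0.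
Proof.
  intros Hm0 Hs Hc. pose proof (pow2_pos d) as HQ. pose proof (onehot_lt d c Hc) as He.
  unfold FG, Q, mmul in *.
  rewrite (Csum_delta _ (c * 2 ^ d + onehot d c)%nat); [| nia |].
  - unfold copy_iso. rewrite embed_hit, Nat.eqb_refl by auto.
    unfold kron, idm, inb. rewrite !div_mul_add, !mod_mul_add, (proj2 (Nat.ltb_lt _ _) Hs) by auto.
    destruct (Nat.eqb_spec s (onehot d c)); simpl; ring.
  - intros K _ Hne. unfold copy_iso. rewrite embed_hit by auto.
    destruct (Nat.eqb_spec K (c * 2 ^ d + onehot d c)); try lia. ring.
Qed.

Lemma UD_fourier_row m0 t c : (m0 < d)%nat ->
  mmul Q (UD d m0) (qudit_row Q FG m0) t c = Cmul (RtoC (/ sqrt (INR d))) (onehot_iso d t c).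
Proof.
  intros Hm0. pose proof (pow2_pos d) as HQ. unfold mmul, Q.
  destruct (Nat.lt_ge_cases c d) as [Hc|Hc].
  2:{ unfold onehot_iso. rewrite embed_out by lia. rewrite Csum_0. ring.
      intros s _. unfold qudit_row, FG, mmul. rewrite Csum_0. destruct (inb (2 ^ d) s); ring.
      intros K _. unfold copy_iso. rewrite embed_out by lia. ring. }
  pose proof (onehot_lt d c Hc) as He.
  rewrite (Csum_delta _ (onehot d c)); auto.
  2:{ intros s Hs Hne. unfold qudit_row, inb. rewrite (proj2 (Nat.ltb_lt _ _) Hs).
      rewrite fourier_copy_entry by auto. destruct (Nat.eqb_spec s (onehot d c)); try lia. ring. }
  unfold qudit_row, inb. rewrite (proj2 (Nat.ltb_lt _ _) He), fourier_copy_entry, Nat.eqb_refl by auto.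
  rewrite UD_col by auto. unfold onehot_iso. rewrite embed_hit by auto.
  destruct (Nat.eqb_spec t (onehot d c)); [|ring].
  unfold Fmat, inb. rewrite (proj2 (Nat.ltb_lt _ _) Hc), (proj2 (Nat.ltb_lt _ _) Hm0). simpl.
  unfold UD_phase.
  transitivity (Cmul (RtoC (/ sqrt (INR d)))
     (Cmul (Cexpi (- (2 * PI * INR ((c + 1) * (m0 + 1)) / INR d)))
           (Cexpi (2 * PI * INR ((c + 1) * (m0 + 1)) / INR d)))); [ring|].
  rewrite Cexpi_neg_mul. ring.
Qed.

End FourierDephasing.

Lemma Delta_rho'_sandwich d A : (1 <= d)%nat -> supported d A ->
  Delta_map d (rho' d A) = sandwich d (onehot_iso d) A.
Proof.
  intros Hd HA. rewrite rho'_sandwich by auto. unfold Delta_map. rewrite sandwich_mmul.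
  assert (Hsq : / sqrt (INR d) * / sqrt (INR d) = / INR d).
  { rewrite <- Rinv_mult, sqrt_sqrt; auto. apply pos_INR. }
  assert (Hterm : forall m0, (m0 < d)%nat ->
    mmul (2 ^ d) (mmul (2 ^ d) (UD d m0)
      (ptrace1 d (2 ^ d) (mmul (d * 2 ^ d) (kron (2 ^ d) (projm d m0) (idm (2 ^ d)))
         (sandwich d (mmul (d * 2 ^ d) (kron (2 ^ d) (Fmat d) (idm (2 ^ d))) (copy_iso d)) A))))
      (adj (UD d m0)) =
    mscale (RtoC (/ INR d)) (sandwich d (onehot_iso d) A)).
  { intros m0 Hm0. rewrite ptrace1_project_sandwich, sandwich_mmul by (auto using pow2_pos).
    rewrite (sandwich_ext d _ (fun t c => Cmul (RtoC (/ sqrt (INR d))) (onehot_iso d t c)))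
      by (intros; apply UD_fourier_row; auto).
    extensionality t; extensionality t'. unfold sandwich, mscale.
    rewrite <- Csum_mul_l. apply Csum_ext; intros. rewrite <- Csum_mul_l. apply Csum_ext; intros.
    rewrite !Cconj_mul, Cconj_RtoC, <- Hsq. apply Ceq; simpl; ring. }
  extensionality t; extensionality t'. unfold Msum.
  rewrite (Csum_ext d _ (fun _ => Cmul (RtoC (/ INR d)) (sandwich d (onehot_iso d) A t t')))
    by (intros m0 Hm0; rewrite Hterm by auto; reflexivity).
  rewrite Csum_const. assert (INR d <> 0) by (apply not_0_INR; lia).
  transitivity (Cmul (RtoC (INR d * / INR d)) (sandwich d (onehot_iso d) A t t')).
  - apply Ceq; simpl; ring.
  - rewrite Rinv_r by auto. apply Ceq; simpl; ring.
Qed.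

(** * Producibility of the images of pure states *)

Lemma skipn_repeat {A} (x : A) k n : skipn k (repeat x n) = repeat x (n - k).
Proof. revert n; induction k; intros n; simpl. rewrite Nat.sub_0_r; auto. destruct n; simpl; auto. Qed.

Lemma dimprod_qubits d : dimprod (qubits d) = (2 ^ d)%nat.
Proof. induction d; simpl; auto. Qed.
Lemma dimprod_qudit_qubits d : dimprod (qudit_qubits d) = (d * 2 ^ d)%nat.
Proof. exact (f_equal (Nat.mul d) (dimprod_qubits d)). Qed.

Lemma digit_qubits d p I : (p < d)%nat -> digit (qubits d) p I = qbit d p I.
Proof.
  intros. unfold digit, qbit, bitn. unfold qubits at 1 2. rewrite skipn_repeat.
  change (repeat 2%nat (d - S p)) with (qubits (d - S p)).
  rewrite dimprod_qubits, nth_repeat_lt, Nat.testbit_spec' by auto.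
  replace (d - S p)%nat with (d - 1 - p)%nat by lia. reflexivity.
Qed.
Lemma digit_qudit d I : digit (qudit_qubits d) 0 I = ((I / 2 ^ d) mod d)%nat.
Proof. unfold digit. simpl. rewrite dimprod_qubits. auto. Qed.
Lemma digit_qudit_qubit d q I : (q < d)%nat -> digit (qudit_qubits d) (S q) I = qbit d q I.
Proof. intros. apply digit_qubits; auto. Qed.

Lemma filter_at_most_one (l : list nat) y f : NoDup l -> (forall p, f p = true -> p = y) ->
  (length (filter f l) <= 1)%nat.
Proof.
  intros Hl Hf. pose proof (NoDup_filter f Hl) as Hn.
  assert (Hall : forall p, In p (filter f l) -> p = y).
  { intros p Hp. apply filter_In in Hp. apply Hf; tauto. }
  destruct (filter f l) as [|a [|b r]]; simpl; try lia.
  exfalso. inversion Hn; subst. apply H1. left. rewrite (Hall a), (Hall b); simpl; auto.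
Qed.

Definition in_support (psi : Vec) (c : nat) : bool :=
  if Ceq_dec (psi c) C0 then false else true.

Lemma CR_support d psi : CR d psi = length (filter (in_support psi) (seq 0 d)).
Proof. reflexivity. Qed.

Lemma in_support_false psi c : in_support psi c = false <-> psi c = C0.
Proof. unfold in_support. destruct (Ceq_dec (psi c) C0); split; auto; congruence. Qed.

Lemma unitV_support d psi : unitV d psi -> exists c0, (c0 < d)%nat /\ in_support psi c0 = true.
Proof.
  intros [_ Hn]. apply NNPP; intro H. assert (vnorm2 d psi = 0); [|lra].
  unfold vnorm2. apply Rsum_0. intros i Hi. destruct (in_support psi i) eqn:E.
  - exfalso; apply H; eauto.
  - apply in_support_false in E. rewrite E. unfold Cnorm2; simpl; ring.
Qed.

(* The qubits in the support of [psi] read [|e_x>]. *)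
Definition agrees_on_support (psi : Vec) (d x I : nat) : bool :=
  forallb (fun c => (negb (in_support psi c) || Nat.eqb (qbit d c I) (if Nat.eqb c x then 1%nat else 0%nat))%bool)
          (seq 0 d).

Lemma agrees_on_supportP psi d x I :
  agrees_on_support psi d x I = true <->
  forall c, (c < d)%nat -> in_support psi c = true -> qbit d c I = if Nat.eqb c x then 1%nat else 0%nat.
Proof.
  unfold agrees_on_support. rewrite forallb_forall. split.
  - intros H c Hc Hin. specialize (H c (proj2 (in_seq d 0 c) ltac:(lia))).
    rewrite Hin in H. apply Nat.eqb_eq; auto.
  - intros H c Hc. apply in_seq in Hc. destruct (in_support psi c) eqn:E; simpl; auto.
    apply Nat.eqb_eq, H; auto. lia.
Qed.

Lemma agrees_on_support_local psi d x I J :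
  (forall c, (c < d)%nat -> in_support psi c = true -> qbit d c I = qbit d c J) ->
  agrees_on_support psi d x I = agrees_on_support psi d x J.
Proof.
  intros H. apply Bool.eq_true_iff_eq. rewrite !agrees_on_supportP.
  split; intros H' c Hc Hin; [rewrite <- H | rewrite H]; auto.
Qed.

Definition idle_factor (psi : Vec) (d q I : nat) : Cplx :=
  if in_support psi q then C1 else if Nat.eqb (qbit d q I) 0 then C1 else C0.

Lemma idle_factor_local psi d q I J : (in_support psi q = false -> qbit d q I = qbit d q J) ->
  idle_factor psi d q I = idle_factor psi d q J.
Proof. unfold idle_factor. destruct (in_support psi q); auto. intros ->; auto. Qed.

(* The image of [psi] under [copy_iso] as a product state: the qudit and the
   qubits of the support of [psi] form block [0]; every other qubit is its own
   block, in state [|0>]. *)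
Definition copy_block (psi : Vec) (p : nat) : nat :=
  match p with O => O | S q => if in_support psi q then O else S q end.

Definition copy_factor (psi : Vec) (d b I : nat) : Cplx :=
  match b with
  | O => if agrees_on_support psi d ((I / 2 ^ d) mod d) I then psi ((I / 2 ^ d) mod d)%nat else C0
  | S q => idle_factor psi d q I
  end.

Lemma copy_iso_vec d psi I : (I < d * 2 ^ d)%nat ->
  mat_vec d (copy_iso d) psi I =
  if Nat.eqb (I mod 2 ^ d) (onehot d (I / 2 ^ d)) then psi (I / 2 ^ d)%nat else C0.
Proof.
  intros HI. pose proof (pow2_pos d) as HQ.
  assert (Hx : (I / 2 ^ d < d)%nat) by (apply Nat.Div0.div_lt_upper_bound; lia).
  pose proof (Nat.div_mod I (2 ^ d) ltac:(lia)) as EI.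
  unfold copy_iso. destruct (Nat.eqb_spec (I mod 2 ^ d) (onehot d (I / 2 ^ d))) as [E|E].
  - replace I with (I / 2 ^ d * 2 ^ d + onehot d (I / 2 ^ d))%nat at 1 by lia.
    rewrite (mat_vec_embed_hit d (fun c => (c * 2 ^ d + onehot d c)%nat)); auto.
    apply copy_iso_inj.
  - apply mat_vec_embed_miss. intros c Hc ->. apply E.
    rewrite div_mul_add, mod_mul_add; auto using onehot_lt.
Qed.

Lemma copy_factor_product d psi I : (I < d * 2 ^ d)%nat ->
  mat_vec d (copy_iso d) psi I = Cprod (S d) (fun b => copy_factor psi d b I).
Proof.
  intros HI. pose proof (pow2_pos d) as HQ.
  rewrite copy_iso_vec, Cprod_shift by auto. simpl copy_factor.
  assert (Hx : (I / 2 ^ d < d)%nat) by (apply Nat.Div0.div_lt_upper_bound; lia).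
  rewrite (Nat.mod_small (I / 2 ^ d)) by auto.
  set (x := (I / 2 ^ d)%nat) in *.
  assert (Hr : (I mod 2 ^ d < 2 ^ d)%nat) by (apply Nat.mod_upper_bound; lia).
  assert (Hq : forall c, (c < d)%nat -> qbit d c I = qbit d c (I mod 2 ^ d))
    by (intros; rewrite qbit_mod; auto).
  destruct (in_support psi x) eqn:Ex.
  2:{ apply in_support_false in Ex. rewrite Ex.
      destruct (Nat.eqb _ _), (agrees_on_support psi d x I); ring. }
  destruct (Nat.eqb_spec (I mod 2 ^ d) (onehot d x)) as [Er|Er].
  - rewrite (proj2 (agrees_on_supportP psi d x I)), Cprod_1; [ring| |].
    + intros q Hq'. unfold idle_factor. destruct (in_support psi q) eqn:Eq; auto.
      rewrite Hq, Er, qbit_onehot by auto.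
      destruct (Nat.eqb_spec q x); [subst; congruence | reflexivity].
    + intros c Hc _. rewrite Hq, Er, qbit_onehot by auto. reflexivity.
  - destruct (qbit_differ d (I mod 2 ^ d) (onehot d x)) as [t [Ht Hdt]]; auto using onehot_lt.
    rewrite qbit_onehot, <- Hq in Hdt by auto.
    destruct (in_support psi t) eqn:Et.
    + replace (agrees_on_support psi d x I) with false; [ring|].
      symmetry. apply Bool.not_true_iff_false. rewrite agrees_on_supportP. eauto.
    + rewrite (Cprod_0 d t); [ring | auto |]. unfold idle_factor. rewrite Et.
      destruct (Nat.eqb_spec t x); [subst; congruence|].
      destruct (qbit_01 d t I) as [B|B]; rewrite B in *; [lia | reflexivity].
Qed.

Lemma copy_block_sizes d k psi : (CR d psi <= k - 1)%nat -> (1 <= k)%nat ->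
  forall b, (b < S d)%nat ->
  (length (filter (fun p => Nat.eqb (copy_block psi p) b) (seq 0 (S d))) <= k)%nat.
Proof.
  intros HCR Hk [|q] Hb.
  - simpl. rewrite <- seq_shift, CR_support in *.
    enough (E : length (filter (fun p => Nat.eqb (copy_block psi p) 0) (map S (seq 0 d))) =
                length (filter (in_support psi) (seq 0 d))) by lia.
    clear. induction (seq 0 d) as [|a l IH]; simpl; auto.
    destruct (in_support psi a); simpl; auto.
  - apply Nat.le_trans with 1%nat; [|lia]. apply (filter_at_most_one _ (S q)); [apply seq_NoDup|].
    intros [|p] H; simpl in H; [discriminate|]. destruct (in_support psi p); [discriminate|].
    apply Nat.eqb_eq in H. auto.
Qed.

Lemma copy_factor_local d psi b I J : (b < S d)%nat ->
  (forall p, (p < S d)%nat -> copy_block psi p = b ->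
     digit (qudit_qubits d) p I = digit (qudit_qubits d) p J) ->
  copy_factor psi d b I = copy_factor psi d b J.
Proof.
  intros Hb Hdig. destruct b as [|q]; simpl.
  - assert (E0 : ((I / 2 ^ d) mod d = (J / 2 ^ d) mod d)%nat).
    { rewrite <- !digit_qudit. apply Hdig; auto; lia. }
    rewrite E0, (agrees_on_support_local psi d _ I J); auto.
    intros c Hc Hin. rewrite <- !digit_qudit_qubit by auto. apply Hdig; try lia. simpl. rewrite Hin. auto.
  - apply idle_factor_local. intros E. rewrite <- !digit_qudit_qubit by lia.
    apply Hdig; auto. simpl. rewrite E. auto.
Qed.

Lemma kprod_pure_copy_iso d k psi : unitV d psi -> (CR d psi <= k - 1)%nat -> (1 <= k)%nat ->
  kprod_pure (qudit_qubits d) k (mat_vec d (copy_iso d) psi).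
Proof.
  intros Hu HCR Hk. unfold kprod_pure. cbv zeta. rewrite dimprod_qudit_qubits.
  replace (length (qudit_qubits d)) with (S d) by (unfold qudit_qubits, qubits; simpl; rewrite repeat_length; auto).
  split; [apply isometry_unitV; auto; apply isometry_copy_iso|].
  exists (copy_block psi), (copy_factor psi d). split; [|split; [|split]].
  - intros [|q] Hp; simpl; auto. destruct (in_support psi q); lia.
  - apply copy_block_sizes; auto.
  - intros b I J Hb _ _ Hdig. apply copy_factor_local; auto.
  - intros I HI. apply copy_factor_product; auto.
Qed.

(* The image of [psi] under [onehot_iso] as a product state: the qubits of the
   support of [psi] form one block, labelled by a fixed [c0] in the support;
   every other qubit is its own block, in state [|0>]. *)
Definition onehot_block (psi : Vec) (c0 p : nat) : nat := if in_support psi p then c0 else p.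

Definition onehot_factor (psi : Vec) (d c0 b I : nat) : Cplx :=
  if Nat.eqb b c0
  then Csum d (fun c => if (in_support psi c && agrees_on_support psi d c I)%bool then psi c else C0)
  else idle_factor psi d b I.

Lemma onehot_iso_vec_hit d psi x : (x < d)%nat -> mat_vec d (onehot_iso d) psi (onehot d x) = psi x.
Proof. intros. apply mat_vec_embed_hit; auto. apply onehot_inj. Qed.

Lemma onehot_iso_vec_miss d psi I : (forall c, (c < d)%nat -> I <> onehot d c) ->
  mat_vec d (onehot_iso d) psi I = C0.
Proof. apply mat_vec_embed_miss. Qed.

Lemma onehot_iso_vec_support d psi I : (I < 2 ^ d)%nat ->
  (forall t, (t < d)%nat -> in_support psi t = false -> qbit d t I = 0%nat) ->
  mat_vec d (onehot_iso d) psi I =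
  Csum d (fun c => if (in_support psi c && agrees_on_support psi d c I)%bool then psi c else C0).
Proof.
  intros HI Hidle.
  destruct (classic (exists x, (x < d)%nat /\ I = onehot d x)) as [[x [Hx ->]]|Hmiss].
  - rewrite onehot_iso_vec_hit by auto.
    assert (Hsx : in_support psi x = true).
    { destruct (in_support psi x) eqn:E; auto.
      specialize (Hidle x Hx E). rewrite qbit_onehot, Nat.eqb_refl in Hidle by auto. discriminate. }
    rewrite (Csum_delta d x); auto.
    + rewrite Hsx, (proj2 (agrees_on_supportP psi d x _)); auto.
      intros c Hc _. apply qbit_onehot; auto.
    + intros c Hc Hne. destruct (in_support psi c) eqn:Ec; simpl; [|ring].
      replace (agrees_on_support psi d c (onehot d x)) with false; auto.
      symmetry. apply Bool.not_true_iff_false. rewrite agrees_on_supportP. intros H.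
      specialize (H c Hc Ec). rewrite qbit_onehot, !Nat.eqb_refl in H by auto.
      destruct (Nat.eqb_spec c x); [lia | discriminate].
  - rewrite onehot_iso_vec_miss by (intros c Hc E; apply Hmiss; eauto).
    symmetry. apply Csum_0. intros c Hc.
    destruct (in_support psi c && agrees_on_support psi d c I)%bool eqn:E; [|reflexivity].
    apply andb_prop in E. destruct E as [Ec Em]. exfalso. apply Hmiss. exists c. split; auto.
    apply (qbit_inj d); auto using onehot_lt. intros c' Hc'.
    rewrite qbit_onehot by auto. destruct (in_support psi c') eqn:Ec'.
    + apply (proj1 (agrees_on_supportP psi d c I)); auto.
    + rewrite Hidle; auto. destruct (Nat.eqb_spec c' c); [subst; congruence | auto].
Qed.

Lemma onehot_factor_product d psi c0 I : (c0 < d)%nat -> in_support psi c0 = true ->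
  (I < 2 ^ d)%nat ->
  mat_vec d (onehot_iso d) psi I = Cprod d (fun b => onehot_factor psi d c0 b I).
Proof.
  intros Hc0 Hsc0 HI. rewrite (Cprod_delta d c0) by auto. unfold onehot_factor at 1.
  rewrite Nat.eqb_refl.
  destruct (classic (exists t, (t < d)%nat /\ in_support psi t = false /\ qbit d t I = 1%nat))
    as [[t [Ht [Et Bt]]]|Hidle].
  - rewrite (Cprod_0 d t); auto.
    2:{ destruct (Nat.eqb_spec t c0); [subst; congruence|].
        unfold onehot_factor, idle_factor. rewrite Et, Bt.
        destruct (Nat.eqb_spec t c0); [lia | reflexivity]. }
    destruct (classic (exists x, (x < d)%nat /\ I = onehot d x)) as [[x [Hx ->]]|Hmiss].
    + rewrite onehot_iso_vec_hit by auto. rewrite qbit_onehot in Bt by auto.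
      destruct (Nat.eqb_spec t x); [subst | discriminate].
      apply in_support_false in Et. rewrite Et. ring.
    + rewrite onehot_iso_vec_miss by (intros c Hc E; apply Hmiss; eauto). ring.
  - assert (B : forall t, (t < d)%nat -> in_support psi t = false -> qbit d t I = 0%nat).
    { intros t Ht Et. destruct (qbit_01 d t I); auto. exfalso; apply Hidle; eauto. }
    rewrite onehot_iso_vec_support by auto. rewrite Cprod_1; [ring|].
    intros b Hb. destruct (Nat.eqb_spec b c0); auto.
    unfold onehot_factor, idle_factor. destruct (Nat.eqb_spec b c0); [lia|].
    destruct (in_support psi b) eqn:E; auto. rewrite B; auto.
Qed.

Lemma onehot_block_sizes d k psi c0 : (CR d psi <= k - 1)%nat -> (2 <= k)%nat ->
  in_support psi c0 = true -> forall b,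
  (length (filter (fun p => Nat.eqb (onehot_block psi c0 p) b) (seq 0 d)) <= k - 1)%nat.
Proof.
  intros HCR Hk Hc0 b. unfold onehot_block. destruct (Nat.eqb_spec b c0) as [->|Eb].
  - rewrite CR_support in HCR. rewrite (filter_ext _ (in_support psi)); auto.
    intros p. destruct (in_support psi p) eqn:E; [apply Nat.eqb_refl|].
    apply Nat.eqb_neq. intros ->. congruence.
  - apply Nat.le_trans with 1%nat; [|lia]. apply (filter_at_most_one _ b); [apply seq_NoDup|].
    intros p H. destruct (in_support psi p); apply Nat.eqb_eq in H; congruence.
Qed.

Lemma onehot_factor_local d psi c0 b I J : (b < d)%nat ->
  (forall p, (p < d)%nat -> onehot_block psi c0 p = b -> qbit d p I = qbit d p J) ->
  onehot_factor psi d c0 b I = onehot_factor psi d c0 b J.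
Proof.
  intros Hb Hdig. unfold onehot_factor, onehot_block in *.
  destruct (Nat.eqb_spec b c0) as [->|Eb].
  - apply Csum_ext. intros c Hc. rewrite (agrees_on_support_local psi d c I J); auto.
    intros c' Hc' Hin. apply Hdig; auto. rewrite Hin; auto.
  - apply idle_factor_local. intros E. apply Hdig; auto. rewrite E; auto.
Qed.

Lemma kprod_pure_onehot_iso d k psi : unitV d psi -> (CR d psi <= k - 1)%nat -> (2 <= k)%nat ->
  kprod_pure (qubits d) (k - 1) (mat_vec d (onehot_iso d) psi).
Proof.
  intros Hu HCR Hk. unfold kprod_pure. cbv zeta. rewrite dimprod_qubits.
  replace (length (qubits d)) with d by (unfold qubits; rewrite repeat_length; auto).
  split; [apply isometry_unitV; auto; apply isometry_onehot_iso|].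
  destruct (unitV_support d psi Hu) as [c0 [Hc0 Hsc0]].
  exists (onehot_block psi c0), (onehot_factor psi d c0). split; [|split; [|split]].
  - intros p Hp. unfold onehot_block. destruct (in_support psi p); auto.
  - intros b _. apply onehot_block_sizes; auto.
  - intros b I J Hb _ _ Hdig. apply onehot_factor_local; auto.
    intros p Hp Hpb. rewrite <- !digit_qubits by auto. auto.
  - intros I HI. apply onehot_factor_product; auto.
Qed.

(** * Transfer of the infimum *)

Lemma Rinf_is_inf (S : R -> Prop) :
  (exists x, S x) -> (forall x, S x -> 0 <= x) -> is_inf S (Rinf S).
Proof.
  intros [x0 Hx0] Hlb. unfold Rinf. apply epsilon_spec.
  destruct (completeness (fun y => S (- y))) as [m [Hm1 Hm2]].
  - exists 0. intros y Hy. apply Hlb in Hy. lra.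
  - exists (- x0). rewrite Ropp_involutive. auto.
  - exists (- m). split.
    + intros x Hx. assert (S (- - x)) by (rewrite Ropp_involutive; auto).
      apply Hm1 in H. lra.
    + intros b Hb. assert (m <= - b); [|lra].
      apply Hm2. intros y Hy. apply Hb in Hy. lra.
Qed.

(* [Rinf] of an empty or unbounded set is a junk value, hence the side conditions. *)
Lemma Rinf_le_Rinf (S T : R -> Prop) :
  (exists x, S x) -> (forall x, S x -> 0 <= x) ->
  (exists x, T x) -> (forall x, T x -> 0 <= x) ->
  (forall x, S x -> exists y, T y /\ y <= x) -> Rinf T <= Rinf S.
Proof.
  intros HS HS0 HT HT0 Hdom.
  destruct (Rinf_is_inf S HS HS0) as [_ Sglb]. destruct (Rinf_is_inf T HT HT0) as [Tlb _].
  apply Sglb. intros x Hx. destruct (Hdom x Hx) as [y [Hy Hyx]]. apply Tlb in Hy. lra.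
Qed.

Lemma incoh_basis_state d k : (1 <= d)%nat -> (2 <= k)%nat -> incoh d (k - 1) (projm d 0).
Proof.
  intros Hd Hk. set (e0 := fun i : nat => if Nat.eqb i 0 then C1 else C0).
  assert (He0 : projm d 0 = outer e0).
  { extensionality i; extensionality j. unfold projm, outer, e0, inb.
    rewrite (proj2 (Nat.ltb_lt 0 d)) by lia.
    destruct (Nat.eqb_spec i 0), (Nat.eqb_spec j 0); simpl; apply Ceq; simpl; ring. }
  assert (Hu : unitV d e0).
  { split.
    - intros i Hi. unfold e0. destruct (Nat.eqb_spec i 0); auto; lia.
    - rewrite vnorm2_Csum, (Csum_delta d 0); [simpl; ring | lia |].
      intros i _ Hi. unfold e0. destruct (Nat.eqb_spec i 0); [lia|]. rewrite Cconj0. ring. }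
  assert (Hcr : (CR d e0 <= 1)%nat).
  { apply (filter_at_most_one _ 0); [apply seq_NoDup|]. intros p. unfold e0.
    destruct (Nat.eqb_spec p 0); auto. destruct (Ceq_dec C0 C0); congruence. }
  split.
  - split; [split|].
    + intros i j H. unfold projm, inb.
      destruct (Nat.eqb_spec i 0), (Nat.eqb_spec j 0); simpl; auto; lia.
    + intros v. unfold quad. rewrite (Csum_delta d 0); try lia.
      2:{ intros i Hi Hne. apply Csum_0; intros j Hj. unfold projm.
          destruct (Nat.eqb_spec i 0); try lia. simpl. ring. }
      rewrite (Csum_delta d 0); try lia.
      2:{ intros j Hj Hne. unfold projm. destruct (Nat.eqb_spec j 0); try lia.
          rewrite Bool.andb_false_r. simpl. ring. }
      unfold projm, inb. rewrite (proj2 (Nat.ltb_lt 0 d)) by lia. simpl. split; nra.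
    + unfold trace. rewrite (Csum_delta d 0); try lia.
      * unfold projm, inb. rewrite (proj2 (Nat.ltb_lt 0 d)) by lia. reflexivity.
      * intros i Hi Hne. unfold projm. destruct (Nat.eqb_spec i 0); try lia. reflexivity.
  - exists 1%nat, (fun _ => 1), (fun _ => e0). split; [|split].
    + intros l Hl. split; [lra|split; auto; lia].
    + simpl. ring.
    + rewrite He0. extensionality i; extensionality j. unfold Msum, mscale. simpl.
      apply Ceq; simpl; ring.
Qed.

Lemma incoh_sandwich_kprod d kd ds kk V sigma :
  isometry (dimprod ds) d V ->
  (forall psi, unitV d psi -> (CR d psi <= kd)%nat -> kprod_pure ds kk (mat_vec d V psi)) ->
  incoh d kd sigma -> kprod ds kk (sandwich d V sigma).
Proof.
  intros HV Hpure [Hden [L [p [psi [Hl [Hs E]]]]]]. split.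
  - apply (CPTP_density d); auto. apply CPTP_sandwich; auto.
  - exists L, p, (fun l => mat_vec d V (psi l)). split; [|split]; auto.
    + intros l Hl'. destruct (Hl l Hl') as [Hp [Hu Hcr]]. auto.
    + rewrite E. apply sandwich_mixture.
Qed.

Section Monotonicity.
Variable D : nat -> Mat -> Mat -> R.
Hypothesis D_nonneg : forall (n : nat) (A B : Mat), density n A -> density n B -> 0 <= D n A B.
Hypothesis D_contr : forall (n m : nat) (Phi : Mat -> Mat) (A B : Mat),
  CPTP n m Phi -> density n A -> density n B -> D m (Phi A) (Phi B) <= D n A B.

Lemma E_D_le_C_D_isometry d k rho ds j V f : density d rho ->
  (1 <= d)%nat -> (2 <= k)%nat -> isometry (dimprod ds) d V ->
  (forall A, supported d A -> f A = sandwich d V A) ->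
  (forall psi, unitV d psi -> (CR d psi <= k - 1)%nat -> kprod_pure ds (j - 1) (mat_vec d V psi)) ->
  E_D D ds j (f rho) <= C_D D d k rho.
Proof.
  intros Hrho Hd Hk HV Hf Hpure.
  assert (HC : CPTP d (dimprod ds) f) by (apply (CPTP_ext _ _ _ _ Hf), CPTP_sandwich; auto).
  assert (Hsupp : forall A, density d A -> supported d A) by (intros A [[HA _] _]; auto).
  assert (Himg : forall sigma, incoh d (k - 1) sigma -> kprod ds (j - 1) (f sigma)).
  { intros sigma Hs. rewrite Hf by (apply Hsupp, Hs). apply (incoh_sandwich_kprod d (k - 1)); auto. }
  pose proof (incoh_basis_state d k Hd Hk) as Hbasis.
  unfold E_D, C_D. apply Rinf_le_Rinf.
  - eauto.
  - intros x [s [[Hs _] ->]]. auto.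
  - exists (D (dimprod ds) (f rho) (f (projm d 0))). eauto.
  - intros x [s [[Hs _] ->]]. apply D_nonneg; auto. apply (CPTP_density d); auto.
  - intros x [s [Hs ->]]. exists (D (dimprod ds) (f rho) (f s)). split; eauto.
    apply D_contr; auto. apply Hs.
Qed.

End Monotonicity.

Theorem theorem3
  (D : nat -> Mat -> Mat -> R)
  (D_nonneg : forall (n : nat) (A B : Mat), density n A -> density n B -> 0 <= D n A B)
  (D_contr : forall (n m : nat) (Phi : Mat -> Mat) (A B : Mat),
      CPTP n m Phi -> density n A -> density n B -> D m (Phi A) (Phi B) <= D n A B)
  (d : nat) (rho : Mat) (Hrho : density d rho) (k : nat) (Hk : (2 <= k <= d)%nat) :
  E_D D (qudit_qubits d) (k + 1)%nat (rho' d rho) <= C_D D d k rho /\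
  E_D D (qubits d) k (Delta_map d (rho' d rho)) <= C_D D d k rho.
Proof.
  split.
  - apply (E_D_le_C_D_isometry D D_nonneg D_contr d k rho _ _ (copy_iso d)); auto; try lia.
    + rewrite dimprod_qudit_qubits. apply isometry_copy_iso.
    + apply rho'_sandwich.
    + intros psi Hu Hcr. replace (k + 1 - 1)%nat with k by lia.
      apply kprod_pure_copy_iso; auto; lia.
  - apply (E_D_le_C_D_isometry D D_nonneg D_contr d k rho _ _ (onehot_iso d)
             (fun A => Delta_map d (rho' d A))); auto; try lia.
    + rewrite dimprod_qubits. apply isometry_onehot_iso.
    + intros A HA. apply Delta_rho'_sandwich; auto; lia.
    + intros psi Hu Hcr. apply kprod_pure_onehot_iso; auto; lia.
Qed.
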